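(* Let $\mathbf C$ be an admissible category of coframes. There is an identity-on-morphisms functor $(L,\lim_L)\mapsto(L,\operatorname{adh}_L)$ from $\mathbf C^{\mathrm{pretop}}$ to $\mathbf C^{\mathrm{adh}}$, which is right adjoint to the identity-on-morphisms functor $(L,\nu)\mapsto(L,\lim_\nu)$ from $\mathbf C^{\mathrm{adh}}$ to $\mathbf C^{\mathrm{pretop}}$. The same holds with $\mathbf C^{\mathrm{pretop}}_{\mathrm{cl}}$ in place of $\mathbf C^{\mathrm{pretop}}$.
   Context: A category of coframes has coframes as objects and coframe morphisms (preserving arbitrary infima and finite suprema); it is admissible if every powerset is an object and there are classes of index sets $\mathcal I,\mathcal J$ with morphisms exactly the monotone maps preserving existing $I$-indexed infima ($I\in\mathcal I$) and $J$-indexed suprema ($J\in\mathcal J$). Every coframe morphism $\varphi$ has a left adjoint $\varphi_!$. $\mathcal C_L$ is the set of complemented elements of $L$. A filter on $L$ is a non-empty upward-closed subset closed under binary meets ($L$ allowed); $\mathbb F L$ is the set of filters. For $\mathcal A\subseteq L$, its grill is $\mathcal A^\#=\{\ell\in L: a\wedge\ell\ne\bot\text{ for all }a\in\mathcal A\}$. A convergence $\mathbf C$-object is $(L,\lim_L)$ with $\lim_L:\mathbb F L\to L$ monotone; morphisms are $\mathbf C$-morphisms $\varphi:L\to L'$ with $\lim_{L'}\mathcal F\le\varphi(\lim_L\varphi^{-1}(\mathcal F))$. It is pretopological if $\lim_L\bigcap_i\mathcal F_i=\bigwedge_i\lim_L\mathcal F_i$ for all families of filters, and classical if $\mathcal F\cap\mathcal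 C_L=\mathcal G\cap\mathcal C_L$ implies $\lim_L\mathcal F=\lim_L\mathcal G$; $\mathbf C^{\mathrm{pretop}}$ and $\mathbf C^{\mathrm{pretop}}_{\mathrm{cl}}$ are the corresponding full subcategories. The raw adherence is $\operatorname{adh}^0_L\ell=\bigvee\{\lim_L\mathcal F:\mathcal F\in\mathbb F L,\ \ell\in\mathcal F^\#\}$, and the adherence is $\operatorname{adh}_L\ell=\bigwedge\{\operatorname{adh}^0_L a: a\in\mathcal C_L,\ a\ge\ell\}$. An adherence structure on $L$ is a monotone $\nu:L\to L$ preserving finite suprema of complemented elements and satisfying $\nu(\ell)=\bigwedge\{\nu(a):a\in\mathcal C_L,a\ge\ell\}$. An adherence $\mathbf C$-object is $(L,\nu_L)$ with $\nu_L$ an adherence structure; $\mathbf C^{\mathrm{adh}}$ has as morphisms the $\mathbf C$-morphisms $\varphi:L\to L'$ with $\nu_{L'}(\ell')\le\varphi(\nu_L(\varphi_!(\ell')))$ for all $\ell'\in L'$. For an adherence structure $\nu$, $\lim_\nu\mathcal F=\bigwedge\{\nu(a):a\in\mathcal C_L\cap\mathcal F^\#\}$. *)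

From Stdlib Require Import List Classical FunctionalExtensionality PropExtensionality.
Set Implicit Arguments.
Unset Strict Implicit.

(* Coframes: complete lattices in which binary joins distribute over
   arbitrary meets:  a \/ /\S = /\ { a \/ s | s in S }.                    *)
Record coframe := Coframe {
  car :> Type;
  le : car -> car -> Prop;
  inf : (car -> Prop) -> car;
  sup : (car -> Prop) -> car;
  le_refl : forall x, le x x;
  le_trans : forall x y z, le x y -> le y z -> le x z;
  le_antisym : forall x y, le x y -> le y x -> x = y;
  inf_lb : forall (S : car -> Prop) x, S x -> le (inf S) x;
  inf_glb : forall (S : car -> Prop) y, (forall x, S x -> le y x) -> le y (inf S);
  sup_ub : forall (S : car -> Prop) x, S x -> le x (sup S);
  sup_lub : forall (S : car -> Prop) y, (forall x, S x -> le x y) -> le (sup S) y;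
  join_inf_distr : forall (a : car) (S : car -> Prop),
    sup (fun z => z = a \/ z = inf S)
    = inf (fun y => exists s, S s /\ y = sup (fun z => z = a \/ z = s))
}.
Arguments le {c} _ _.
Arguments inf {c} _.
Arguments sup {c} _.

Section Ops.
Variable L : coframe.
Definition top : L := inf (fun _ => False).
Definition bot : L := sup (fun _ => False).
Definition meet (a b : L) : L := inf (fun z => z = a \/ z = b).
Definition join (a b : L) : L := sup (fun z => z = a \/ z = b).
Definition inf_fam (I : Type) (g : I -> L) : L := inf (fun x => exists i, g i = x).
Definition sup_fam (I : Type) (g : I -> L) : L := sup (fun x => exists i, g i = x).
Definition complemented (a : L) : Prop :=
  exists b, meet a b = bot /\ join a b = top.
End Ops.
Arguments top {L}.
Arguments bot {L}.

Section Powerset.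
Variable X : Type.
Definition ps_le (A B : X -> Prop) := forall x, A x -> B x.
Definition ps_inf (S : (X -> Prop) -> Prop) : X -> Prop := fun x => forall A, S A -> A x.
Definition ps_sup (S : (X -> Prop) -> Prop) : X -> Prop := fun x => exists A, S A /\ A x.

Lemma ps_ext (A B : X -> Prop) : ps_le A B -> ps_le B A -> A = B.
Proof.
  intros H1 H2; apply functional_extensionality; intro x.
  apply propositional_extensionality; split; auto.
Qed.

Lemma ps_distr (a : X -> Prop) (S : (X -> Prop) -> Prop) :
  ps_sup (fun z => z = a \/ z = ps_inf S)
  = ps_inf (fun y => exists s, S s /\ y = ps_sup (fun z => z = a \/ z = s)).
Proof.
  apply ps_ext.
  - intros x [A [[-> | ->] HA]] B [s [Hs ->]].
    + exists a; split; [left; reflexivity | exact HA].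
    + exists s; split; [right; reflexivity | exact (HA s Hs)].
  - intros x H. destruct (classic (a x)) as [Ha | Ha].
    + exists a; split; [left; reflexivity | exact Ha].
    + exists (ps_inf S); split; [right; reflexivity|].
      intros s Hs. destruct (H _ (ex_intro _ s (conj Hs eq_refl))) as [A [[-> | ->] HA]].
      * contradiction.
      * exact HA.
Qed.

Definition powerset : coframe.
Proof.
  refine (@Coframe (X -> Prop) ps_le ps_inf ps_sup _ _ ps_ext _ _ _ _ ps_distr).
  - intros A x; auto.
  - intros A B C H1 H2 x Hx; auto.
  - intros S A HA x Hx; apply Hx, HA.
  - intros S B H x Hx A HA; apply (H A HA), Hx.
  - intros S A HA x Hx; exists A; auto.
  - intros S B H x [A [HA Hx]]; apply (H A HA), Hx.
Defined.
End Powerset.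

Definition monotone (L L' : coframe) (f : L -> L') : Prop :=
  forall x y, le x y -> le (f x) (f y).

Definition coframe_morphism (L L' : coframe) (f : L -> L') : Prop :=
  (forall S : L -> Prop, f (inf S) = inf (fun y => exists x, S x /\ f x = y))
  /\ (forall s : list L,
        f (sup (fun x => In x s)) = sup (fun y => exists x, In x s /\ f x = y)).

Definition pres_inf_idx (I : Type) (L L' : coframe) (f : L -> L') : Prop :=
  forall g : I -> L, f (inf_fam g) = inf_fam (fun i => f (g i)).
Definition pres_sup_idx (J : Type) (L L' : coframe) (f : L -> L') : Prop :=
  forall g : J -> L, f (sup_fam g) = sup_fam (fun j => f (g j)).

(* An admissible category of coframes: a class of coframes (objects)
   containing every powerset, and classes of index sets I, J such that the
   morphisms are exactly the monotone maps preserving I-indexed infima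
   (I in IdxI) and J-indexed suprema (J in IdxJ); being a category of
   coframes, all these morphisms are coframe morphisms. *)
Record admissible_cat := AdmissibleCat {
  Obj : coframe -> Prop;
  IdxI : Type -> Prop;
  IdxJ : Type -> Prop;
  powerset_Obj : forall X : Type, Obj (powerset X);
  mor_is_coframe_morphism : forall (L L' : coframe) (f : L -> L'),
    Obj L -> Obj L' -> monotone f ->
    (forall I, IdxI I -> pres_inf_idx I f) ->
    (forall J, IdxJ J -> pres_sup_idx J f) ->
    coframe_morphism f
}.

Definition Mor (C : admissible_cat) (L L' : coframe) (f : L -> L') : Prop :=
  monotone f
  /\ (forall I, IdxI C I -> pres_inf_idx I f)
  /\ (forall J, IdxJ C J -> pres_sup_idx J f).

(* left adjoint phi_! of phi (exists as phi preserves arbitrary infima) *)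
Definition lower_adj (L L' : coframe) (phi : L -> L') : L' -> L :=
  fun l' => inf (fun l => le l' (phi l)).

Section Filters.
Variable L : coframe.
Definition is_filter (F : L -> Prop) : Prop :=
  (exists x, F x)
  /\ (forall x y, F x -> le x y -> F y)
  /\ (forall x y, F x -> F y -> F (meet x y)).
Definition grill (A : L -> Prop) : L -> Prop :=
  fun l => forall a, A a -> meet a l <> bot.
End Filters.

Definition preimage (L L' : coframe) (phi : L -> L') (F : L' -> Prop) : L -> Prop :=
  fun l => F (phi l).

(* A convergence structure lim : FL -> L is represented as a function on
   all subsets of L; only its values on filters are ever used. *)
Definition limT (L : coframe) := (L -> Prop) -> L.

Section Convergence.
Variable C : admissible_cat.

Definition conv_obj (L : coframe) (lim : limT L) : Prop :=
  Obj C L /\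
  forall F G : L -> Prop, is_filter F -> is_filter G ->
    (forall x, F x -> G x) -> le (lim F) (lim G).

Definition pretopological (L : coframe) (lim : limT L) : Prop :=
  forall (I : Type) (Fs : I -> L -> Prop), (forall i, is_filter (Fs i)) ->
    lim (fun x => forall i, Fs i x) = inf_fam (fun i => lim (Fs i)).

Definition classical_conv (L : coframe) (lim : limT L) : Prop :=
  forall F G : L -> Prop, is_filter F -> is_filter G ->
    (forall a, complemented a -> (F a <-> G a)) -> lim F = lim G.

Definition pretop_obj (L : coframe) (lim : limT L) : Prop :=
  conv_obj lim /\ pretopological lim.
Definition pretop_cl_obj (L : coframe) (lim : limT L) : Prop :=
  conv_obj lim /\ pretopological lim /\ classical_conv lim.

Definition conv_mor (L L' : coframe) (lim : limT L) (lim' : limT L') (phi : L -> L') : Prop :=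
  Mor C phi /\
  forall F : L' -> Prop, is_filter F -> le (lim' F) (phi (lim (preimage phi F))).

Definition adh0 (L : coframe) (lim : limT L) (l : L) : L :=
  sup (fun y => exists F, is_filter F /\ grill F l /\ y = lim F).
Definition adh (L : coframe) (lim : limT L) (l : L) : L :=
  inf (fun y => exists a, complemented a /\ le l a /\ y = adh0 lim a).

Definition adherence_structure (L : coframe) (nu : L -> L) : Prop :=
  monotone nu
  /\ (forall s : list L, (forall a, In a s -> complemented a) ->
        nu (sup (fun x => In x s)) = sup (fun y => exists x, In x s /\ nu x = y))
  /\ (forall l, nu l = inf (fun y => exists a, complemented a /\ le l a /\ y = nu a)).

Definition adh_obj (L : coframe) (nu : L -> L) : Prop :=
  Obj C L /\ adherence_structure nu.

Definition adh_mor (L L' : coframe) (nu : L -> L) (nu' : L' -> L') (phi : L -> L') : Prop :=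
  Mor C phi /\ forall l', le (nu' l') (phi (nu (lower_adj phi l'))).

Definition lim_of (L : coframe) (nu : L -> L) : limT L :=
  fun F => inf (fun y => exists a, complemented a /\ grill F a /\ y = nu a).

(* The statement, for a full subcategory P of convergence C-objects
   (P = C^pretop or C^pretop_cl):
   - G : (L,lim) |-> (L, adh_L) is an identity-on-morphisms functor P -> C^adh;
   - F : (L,nu) |-> (L, lim_nu) is an identity-on-morphisms functor C^adh -> P;
   - F is left adjoint to G: there are a unit eta : Id => G F and a counit
     eps : F G => Id, natural, satisfying the triangle identities. *)
Definition adjunction_statement (P : forall L : coframe, limT L -> Prop) : Prop :=
  (forall (L : coframe) (lim : limT L), P L lim -> adh_obj (adh lim))
  /\ (forall (L L' : coframe) (lim : limT L) (lim' : limT L') (phi : L -> L'),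
        P L lim -> P L' lim' -> conv_mor lim lim' phi -> adh_mor (adh lim) (adh lim') phi)
  /\ (forall (L : coframe) (nu : L -> L), adh_obj nu -> P L (lim_of nu))
  /\ (forall (L L' : coframe) (nu : L -> L) (nu' : L' -> L') (phi : L -> L'),
        adh_obj nu -> adh_obj nu' -> adh_mor nu nu' phi ->
        conv_mor (lim_of nu) (lim_of nu') phi)
  /\ exists (eta : forall L : coframe, (L -> L) -> L -> L)
            (eps : forall L : coframe, limT L -> L -> L),
       (forall (L : coframe) (nu : L -> L), adh_obj nu ->
          adh_mor nu (adh (lim_of nu)) (eta L nu))
       /\ (forall (L : coframe) (lim : limT L), P L lim ->
          conv_mor (lim_of (adh lim)) lim (eps L lim))
       /\ (forall (L L' : coframe) (nu : L -> L) (nu' : L' -> L') (phi : L -> L'),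
             adh_obj nu -> adh_obj nu' -> adh_mor nu nu' phi ->
             forall x, eta L' nu' (phi x) = phi (eta L nu x))
       /\ (forall (L L' : coframe) (lim : limT L) (lim' : limT L') (phi : L -> L'),
             P L lim -> P L' lim' -> conv_mor lim lim' phi ->
             forall x, eps L' lim' (phi x) = phi (eps L lim x))
       (* triangle identities: eps_{F A} o F eta_A = id, G eps_B o eta_{G B} = id *)
       /\ (forall (L : coframe) (nu : L -> L), adh_obj nu ->
             forall x, eps L (lim_of nu) (eta L nu x) = x)
       /\ (forall (L : coframe) (lim : limT L), P L lim ->
             forall x, eps L lim (eta L (adh lim) x) = x).
End Convergence.

(* The unit and the counit of the adjunction are identities, so everything
   reduces to two inequalities, [adh (lim_of nu) <= nu] and
   [lim <= lim_of (adh lim)], plus the verification that both constructions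
   land in the right categories.  The one idea behind all of this is that,
   for a complemented [a] with complement [a'] and a filter [F],
   [a] lies in the grill of [F] exactly when [a'] is not in [F]: grill
   membership of complemented elements is thus "prime" (it splits finite
   joins), commutes with intersections of filters and with preimages, and
   only depends on the complemented members of [F]. *)

From Stdlib Require Import List Classical FunctionalExtensionality PropExtensionality.

Set Implicit Arguments.
Unset Strict Implicit.

Section CoframeLattice.
Variable L : coframe.
Implicit Types a b c x y : L.

Lemma inf_ext (S T : L -> Prop) : (forall x, S x <-> T x) -> inf S = inf T.
Proof.
  intro H. f_equal. apply functional_extensionality; intro x.
  apply propositional_extensionality, H.
Qed.

Lemma sup_ext (S T : L -> Prop) : (forall x, S x <-> T x) -> sup S = sup T.
Proof.
  intro H. f_equal. apply functional_extensionality; intro x.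
  apply propositional_extensionality, H.
Qed.

Lemma meet_lb1 a b : le (meet a b) a. Proof. apply inf_lb; auto. Qed.
Lemma meet_lb2 a b : le (meet a b) b. Proof. apply inf_lb; auto. Qed.
Lemma meet_glb x a b : le x a -> le x b -> le x (meet a b).
Proof. intros; apply inf_glb; intros z [-> | ->]; auto. Qed.

Lemma join_ub1 a b : le a (join a b). Proof. apply sup_ub; auto. Qed.
Lemma join_ub2 a b : le b (join a b). Proof. apply sup_ub; auto. Qed.
Lemma join_lub x a b : le a x -> le b x -> le (join a b) x.
Proof. intros; apply sup_lub; intros z [-> | ->]; auto. Qed.

Lemma bot_le x : le bot x. Proof. apply sup_lub; intros _ []. Qed.
Lemma le_top x : le x top. Proof. apply inf_glb; intros _ []. Qed.
Lemma le_bot_eq x : le x bot -> x = bot.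
Proof. intro H; apply le_antisym; auto using bot_le. Qed.

Lemma meet_comm a b : meet a b = meet b a.
Proof. apply le_antisym; apply meet_glb; auto using meet_lb1, meet_lb2. Qed.

Lemma join_comm a b : join a b = join b a.
Proof. apply le_antisym; apply join_lub; auto using join_ub1, join_ub2. Qed.

Lemma join_bot a : join a bot = a.
Proof.
  apply le_antisym; [apply join_lub | apply join_ub1]; auto using le_refl, bot_le.
Qed.

Lemma meet_mono a b c d : le a c -> le b d -> le (meet a b) (meet c d).
Proof.
  intros Hac Hbd. apply meet_glb.
  - exact (le_trans (meet_lb1 a b) Hac).
  - exact (le_trans (meet_lb2 a b) Hbd).
Qed.

Lemma join_meet_distr a b c : join a (meet b c) = meet (join a b) (join a c).
Proof.
  unfold join at 1, meet at 1. rewrite join_inf_distr. apply inf_ext.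
  intro x; split.
  - intros [s [[-> | ->] ->]]; auto.
  - intros [-> | ->]; eauto.
Qed.

Definition is_complement a a' : Prop := meet a a' = bot /\ join a a' = top.

Lemma is_complement_sym a a' : is_complement a a' -> is_complement a' a.
Proof. intros [H1 H2]; split; [rewrite meet_comm | rewrite join_comm]; assumption. Qed.

Lemma le_complement a a' x : is_complement a a' -> meet x a = bot -> le x a'.
Proof.
  intros [_ Htop] Hxa.
  assert (Ea' : a' = meet (join a' x) (join a' a))
    by now rewrite <- join_meet_distr, Hxa, join_bot.
  rewrite Ea'. apply meet_glb; [apply join_ub2|].
  rewrite join_comm, Htop. apply le_top.
Qed.

Lemma is_complement_join a a' b b' :
  is_complement a a' -> is_complement b b' -> is_complement (join a b) (meet a' b').
Proof.
  intros [Ha1 Ha2] [Hb1 Hb2]; split.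
  - apply le_bot_eq. rewrite <- Ha1. apply meet_glb.
    + assert (Ea : a = meet (join a b) (join a b'))
        by now rewrite <- join_meet_distr, Hb1, join_bot.
      rewrite Ea at 2. apply meet_mono; [apply le_refl|].
      eapply le_trans; [apply meet_lb2 | apply join_ub2].
    + eapply le_trans; [apply meet_lb2 | apply meet_lb1].
  - apply le_antisym; [apply le_top|]. rewrite join_meet_distr. apply meet_glb.
    + rewrite <- Ha2. apply join_lub; [eapply le_trans; apply join_ub1 | apply join_ub2].
    + rewrite <- Hb2. apply join_lub; [eapply le_trans; [apply join_ub2 | apply join_ub1]
                                      | apply join_ub2].
Qed.

Lemma is_complement_bot : is_complement bot top.
Proof.
  split; [apply le_bot_eq, meet_lb1|].
  apply le_antisym; [apply le_top | apply join_ub2].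
Qed.

Lemma complemented_bot : complemented (@bot L).
Proof. exists top; apply is_complement_bot. Qed.

Lemma complemented_join a b : complemented a -> complemented b -> complemented (join a b).
Proof. intros [a' Ha] [b' Hb]. exists (meet a' b'). now apply is_complement_join. Qed.

Lemma sup_In_cons a s : sup (fun x => In x (a :: s)) = join a (sup (fun x => In x s)).
Proof.
  apply le_antisym.
  - apply sup_lub. intros x [<- | Hx]; [apply join_ub1|].
    eapply le_trans; [apply (@sup_ub L (fun x => In x s)), Hx | apply join_ub2].
  - apply join_lub; [apply sup_ub; now left|].
    apply sup_lub; intros x Hx. apply (@sup_ub L (fun x => In x (a :: s))). now right.
Qed.

Lemma sup_map_In_cons (g : L -> L) a s :
  sup (fun y => exists x, In x (a :: s) /\ g x = y)
  = join (g a) (sup (fun y => exists x, In x s /\ g x = y)).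
Proof.
  set (S := fun y => exists x, In x (a :: s) /\ g x = y).
  apply le_antisym.
  - apply sup_lub. intros y [x [[<- | Hx] <-]]; [apply join_ub1|].
    eapply le_trans; [apply (@sup_ub L (fun y => exists x, In x s /\ g x = y)); eauto
                     | apply join_ub2].
  - apply join_lub; [apply (@sup_ub L S); exists a; split; [now left | reflexivity]|].
    apply sup_lub; intros y [x [Hx <-]].
    apply (@sup_ub L S). exists x; split; [now right | reflexivity].
Qed.

Lemma complemented_sup_In s :
  (forall a, In a s -> complemented a) -> complemented (sup (fun x => In x s)).
Proof.
  induction s as [|a s IH]; intro Hs; [apply complemented_bot|].
  rewrite sup_In_cons. apply complemented_join; [apply Hs; now left|].
  apply IH; intros; apply Hs; now right.
Qed.

Lemma map_sup_In_complemented (g : L -> L) :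
  g bot = bot ->
  (forall a b, complemented a -> complemented b -> g (join a b) = join (g a) (g b)) ->
  forall s, (forall a, In a s -> complemented a) ->
  g (sup (fun x => In x s)) = sup (fun y => exists x, In x s /\ g x = y).
Proof.
  intros Hbot Hjoin. induction s as [|a s IH]; intro Hs.
  - change (g bot = sup (fun y => exists x, In x nil /\ g x = y)).
    rewrite Hbot. apply sup_ext. intro y; split; [intros [] | intros [x [[] _]]].
  - assert (Hs' : forall b, In b s -> complemented b) by (intros; apply Hs; now right).
    rewrite sup_In_cons, sup_map_In_cons, <- IH by exact Hs'.
    apply Hjoin; [apply Hs; now left | now apply complemented_sup_In].
Qed.

End CoframeLattice.

Section Grills.
Variable L : coframe.
Implicit Types (a : L) (F : L -> Prop).

Lemma filter_top F : is_filter F -> F top.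
Proof. intros [[x Hx] [Hup _]]. exact (Hup x top Hx (le_top x)). Qed.

Lemma grill_mono F a b : grill F a -> le a b -> grill F b.
Proof.
  intros Ha Hab f Hf Hfb. apply (Ha f Hf), le_bot_eq.
  rewrite <- Hfb. apply meet_mono; [apply le_refl | exact Hab].
Qed.

Lemma not_grill_bot F : is_filter F -> ~ grill F bot.
Proof. intros [[x Hx] _] Hg. apply (Hg x Hx), le_bot_eq, meet_lb2. Qed.

Lemma grill_not_complement F a a' : is_complement a a' -> grill F a -> ~ F a'.
Proof. intros [Hbot _] Hg Ha'. apply (Hg a' Ha'). now rewrite meet_comm. Qed.

Lemma grill_of_not_complement F a a' :
  is_filter F -> is_complement a a' -> ~ F a' -> grill F a.
Proof.
  intros [_ [Hup _]] Ha Hna' f Hf Hfa. apply Hna', (Hup f); [exact Hf|].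
  exact (le_complement Ha Hfa).
Qed.

Lemma grill_join F a a' b b' : is_filter F -> is_complement a a' -> is_complement b b' ->
  grill F (join a b) -> grill F a \/ grill F b.
Proof.
  intros HF Ha Hb Hab.
  destruct (classic (F a')) as [Fa' | Fa']; [| left; exact (grill_of_not_complement HF Ha Fa')].
  destruct (classic (F b')) as [Fb' | Fb']; [| right; exact (grill_of_not_complement HF Hb Fb')].
  exfalso. apply (grill_not_complement (is_complement_join Ha Hb) Hab).
  destruct HF as [_ [_ Hmeet]]. now apply Hmeet.
Qed.

End Grills.

Section CoframeMorphism.
Variables L L' : coframe.
Variable phi : L -> L'.
Hypothesis phi_cm : coframe_morphism phi.
Implicit Types a b : L.

Lemma phi_inf (S : L -> Prop) : phi (inf S) = inf (fun y => exists x, S x /\ phi x = y).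
Proof. apply (proj1 phi_cm). Qed.

Lemma phi_meet a b : phi (meet a b) = meet (phi a) (phi b).
Proof.
  unfold meet at 1. rewrite phi_inf. apply inf_ext. intro y; split.
  - intros [x [[-> | ->] <-]]; auto.
  - intros [-> | ->]; eauto.
Qed.

Lemma phi_join a b : phi (join a b) = join (phi a) (phi b).
Proof.
  assert (E : join a b = sup (fun x => In x (a :: b :: nil))).
  { apply sup_ext. intro x; simpl; split.
    - intros [-> | ->]; auto.
    - intros [<- | [<- | []]]; auto. }
  rewrite E, (proj2 phi_cm). apply sup_ext. intro y; split.
  - intros [x [[<- | [<- | []]] <-]]; auto.
  - intros [-> | ->]; [exists a | exists b]; simpl; auto.
Qed.

Lemma phi_bot : phi bot = bot.
Proof.
  change (phi (sup (fun x => In x nil)) = bot). rewrite (proj2 phi_cm).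
  apply sup_ext. intro y; split; [intros [x [[] _]] | intros []].
Qed.

Lemma phi_top : phi top = top.
Proof.
  unfold top at 1. rewrite phi_inf. apply inf_ext. intro y; split; [intros [x [[] _]] | intros []].
Qed.

Lemma monotone_coframe_morphism : monotone phi.
Proof.
  intros a b Hab.
  assert (Ea : a = meet a b) by (apply le_antisym; auto using meet_glb, le_refl, meet_lb1).
  rewrite Ea, phi_meet. apply meet_lb2.
Qed.

Lemma is_complement_phi a a' : is_complement a a' -> is_complement (phi a) (phi a').
Proof.
  intros [Hbot Htop]; split.
  - now rewrite <- phi_meet, Hbot, phi_bot.
  - now rewrite <- phi_join, Htop, phi_top.
Qed.

Lemma complemented_phi a : complemented a -> complemented (phi a).
Proof. intros [a' Ha]. exists (phi a'). now apply is_complement_phi. Qed.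

Lemma preimage_filter (G : L' -> Prop) : is_filter G -> is_filter (preimage phi G).
Proof.
  intros HG. pose proof (filter_top HG) as Gtop. destruct HG as [_ [Hup Hmeet]].
  unfold preimage; split; [|split].
  - exists top. now rewrite phi_top.
  - intros x y Hx Hxy. exact (Hup _ _ Hx (monotone_coframe_morphism Hxy)).
  - intros x y Hx Hy. rewrite phi_meet; auto.
Qed.

Lemma grill_preimage (G : L' -> Prop) a : grill G (phi a) -> grill (preimage phi G) a.
Proof. intros Hg l Hl Hla. apply (Hg _ Hl). now rewrite <- phi_meet, Hla, phi_bot. Qed.

Lemma grill_preimage_complement (G : L' -> Prop) a a' : is_filter G -> is_complement a a' ->
  grill (preimage phi G) a -> grill G (phi a).
Proof.
  intros HG Ha Hg. apply (grill_of_not_complement HG (is_complement_phi Ha)).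
  exact (grill_not_complement Ha Hg).
Qed.

Lemma lower_adj_unit (l' : L') : le l' (phi (lower_adj phi l')).
Proof. unfold lower_adj. rewrite phi_inf. apply inf_glb. intros y [x [Hx <-]]; exact Hx. Qed.

End CoframeMorphism.

Lemma lower_adj_counit (L L' : coframe) (phi : L -> L') (a : L) :
  le (lower_adj phi (phi a)) a.
Proof. apply inf_lb, le_refl. Qed.

Lemma lower_adj_id (L : coframe) (l : L) : lower_adj (fun x => x) l = l.
Proof. apply le_antisym; [apply inf_lb, le_refl | apply inf_glb; auto]. Qed.

Lemma Mor_id (C : admissible_cat) (L : coframe) : Mor C (fun x : L => x).
Proof. split; [|split]; [intros x y H; exact H | intros I _ g | intros J _ g]; reflexivity. Qed.

Lemma Mor_coframe_morphism (C : admissible_cat) (L L' : coframe) (phi : L -> L') :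
  Obj C L -> Obj C L' -> Mor C phi -> coframe_morphism phi.
Proof.
  intros HL HL' [Hmono [Hinf Hsup]]. exact (mor_is_coframe_morphism HL HL' Hmono Hinf Hsup).
Qed.

Section Adherence.
Variable L : coframe.
Variable lim : limT L.

Lemma adh0_mono (l l' : L) : le l l' -> le (adh0 lim l) (adh0 lim l').
Proof.
  intro Hl. apply sup_lub. intros y [F [HF [Hg ->]]]. apply sup_ub.
  exists F; split; [exact HF | split; [exact (grill_mono Hg Hl) | reflexivity]].
Qed.

Lemma adh0_bot : adh0 lim bot = bot.
Proof.
  apply le_bot_eq, sup_lub. intros y [F [HF [Hg _]]]. contradiction (not_grill_bot HF Hg).
Qed.

Lemma adh0_join (a b : L) : complemented a -> complemented b ->
  adh0 lim (join a b) = join (adh0 lim a) (adh0 lim b).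
Proof.
  intros [a' Ha] [b' Hb]. apply le_antisym.
  - apply sup_lub. intros y [F [HF [Hg ->]]].
    destruct (grill_join HF Ha Hb Hg) as [Hga | Hgb].
    + eapply le_trans; [|apply join_ub1]. apply sup_ub. eauto.
    + eapply le_trans; [|apply join_ub2]. apply sup_ub. eauto.
  - apply join_lub; apply adh0_mono; [apply join_ub1 | apply join_ub2].
Qed.

Lemma adh_complemented (a : L) : complemented a -> adh lim a = adh0 lim a.
Proof.
  intro Ha. apply le_antisym.
  - apply inf_lb. exists a; repeat split; auto using le_refl.
  - apply inf_glb. intros y [b [_ [Hab ->]]]. exact (adh0_mono Hab).
Qed.

Lemma adh_mono (l l' : L) : le l l' -> le (adh lim l) (adh lim l').
Proof.
  intro Hl. apply inf_glb. intros y [a [Ha [Hla ->]]]. apply inf_lb.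
  exists a; repeat split; auto. eapply le_trans; eauto.
Qed.

Lemma adherence_structure_adh : adherence_structure (adh lim).
Proof.
  split; [|split].
  - intros x y; apply adh_mono.
  - apply map_sup_In_complemented.
    + now rewrite adh_complemented, adh0_bot by apply complemented_bot.
    + intros a b Ha Hb.
      rewrite !adh_complemented by auto using complemented_join.
      now apply adh0_join.
  - intro l. unfold adh at 1. apply inf_ext. intro y; split;
      intros [a [Ha [Hla ->]]]; exists a; repeat split; auto;
      rewrite adh_complemented; auto.
Qed.

Lemma lim_le_lim_of_adh (F : L -> Prop) : is_filter F -> le (lim F) (lim_of (adh lim) F).
Proof.
  intro HF. apply inf_glb. intros y [a [Ha [Hg ->]]].
  rewrite adh_complemented by exact Ha. apply sup_ub. eauto.
Qed.

End Adherence.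

Section AdherenceConvergence.
Variable L : coframe.
Variable nu : L -> L.

Lemma lim_of_mono (F G : L -> Prop) : (forall x, F x -> G x) -> le (lim_of nu F) (lim_of nu G).
Proof.
  intro HFG. apply inf_glb. intros y [a [Ha [Hg ->]]]. apply inf_lb.
  exists a; repeat split; auto. intros f Hf; apply Hg, HFG, Hf.
Qed.

Lemma lim_of_pretopological : pretopological (lim_of nu).
Proof.
  intros I Fs HFs. apply le_antisym.
  - apply inf_glb. intros y [i <-]. apply lim_of_mono. intros x Hx; apply Hx.
  - apply inf_glb. intros y [a [[a' Ha] [Hg ->]]].
    assert (Hi : exists i, ~ Fs i a').
    { apply not_all_ex_not. exact (grill_not_complement Ha Hg). }
    destruct Hi as [i Hi].
    eapply le_trans; [apply inf_lb; exists i; reflexivity|].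
    apply inf_lb. exists a; repeat split; [exists a'; exact Ha|].
    exact (grill_of_not_complement (HFs i) Ha Hi).
Qed.

Lemma lim_of_classical : classical_conv (lim_of nu).
Proof.
  assert (Hgrill : forall F G : L -> Prop, is_filter G ->
            (forall a, complemented a -> (F a <-> G a)) ->
            forall a, complemented a -> grill F a -> grill G a).
  { intros F G HG HFG a [a' Ha] Hg. apply (grill_of_not_complement HG Ha).
    rewrite <- HFG by (exists a; now apply is_complement_sym).
    exact (grill_not_complement Ha Hg). }
  intros F G HF HG HFG. apply inf_ext. intro y; split;
    intros [a [Ha [Hg ->]]]; exists a; repeat split; auto.
  - exact (Hgrill F G HG HFG a Ha Hg).
  - apply (Hgrill G F HF); [intros b Hb; symmetry; apply HFG, Hb | exact Ha | exact Hg].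
Qed.

Lemma adh0_lim_of_le (a : L) : complemented a -> le (adh0 (lim_of nu) a) (nu a).
Proof.
  intro Ha. apply sup_lub. intros y [F [_ [Hg ->]]]. apply inf_lb. eauto.
Qed.

End AdherenceConvergence.

Section Functors.
Variable C : admissible_cat.

Lemma adh_obj_adh (L : coframe) (lim : limT L) : conv_obj C lim -> adh_obj C (adh lim).
Proof. intros [HL _]. split; [exact HL | apply adherence_structure_adh]. Qed.

Lemma conv_obj_lim_of (L : coframe) (nu : L -> L) : adh_obj C nu -> conv_obj C (lim_of nu).
Proof. intros [HL _]. split; [exact HL | intros F G _ _; apply lim_of_mono]. Qed.

Lemma adh0_conv_mor (L L' : coframe) (lim : limT L) (lim' : limT L') (phi : L -> L') (a : L) :
  coframe_morphism phi ->
  (forall G : L' -> Prop, is_filter G -> le (lim' G) (phi (lim (preimage phi G)))) ->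
  le (adh0 lim' (phi a)) (phi (adh0 lim a)).
Proof.
  intros Hcm Hlim. apply sup_lub. intros y [G [HG [Hg ->]]].
  eapply le_trans; [exact (Hlim G HG)|]. apply (monotone_coframe_morphism Hcm), sup_ub.
  exists (preimage phi G).
  split; [exact (preimage_filter Hcm HG) | split; [exact (grill_preimage Hcm Hg) | reflexivity]].
Qed.

Lemma adh_mor_conv_mor (L L' : coframe) (lim : limT L) (lim' : limT L') (phi : L -> L') :
  conv_obj C lim -> conv_obj C lim' -> conv_mor C lim lim' phi ->
  adh_mor C (adh lim) (adh lim') phi.
Proof.
  intros [HL _] [HL' _] [Hmor Hlim].
  pose proof (Mor_coframe_morphism HL HL' Hmor) as Hcm.
  split; [exact Hmor|]. intro l'.
  unfold adh at 2. rewrite (phi_inf Hcm). apply inf_glb.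
  intros y [x [[a [Ha [Hla ->]]] <-]].
  eapply le_trans; [| exact (adh0_conv_mor a Hcm Hlim)].
  apply inf_lb. exists (phi a); repeat split; [exact (complemented_phi Hcm Ha)|].
  eapply le_trans; [exact (lower_adj_unit Hcm l') | exact (monotone_coframe_morphism Hcm Hla)].
Qed.

Lemma conv_mor_adh_mor (L L' : coframe) (nu : L -> L) (nu' : L' -> L') (phi : L -> L') :
  adh_obj C nu -> adh_obj C nu' -> adh_mor C nu nu' phi ->
  conv_mor C (lim_of nu) (lim_of nu') phi.
Proof.
  intros [HL [nu_mono _]] [HL' _] [Hmor Hnu].
  pose proof (Mor_coframe_morphism HL HL' Hmor) as Hcm.
  split; [exact Hmor|]. intros F HF.
  unfold lim_of at 2. rewrite (phi_inf Hcm). apply inf_glb.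
  intros y [x [[a [[a' Ha] [Hg ->]]] <-]].
  eapply le_trans.
  - apply inf_lb. exists (phi a); repeat split.
    + exists (phi a'). exact (is_complement_phi Hcm Ha).
    + exact (grill_preimage_complement Hcm HF Ha Hg).
  - eapply le_trans; [apply Hnu|].
    apply (monotone_coframe_morphism Hcm), nu_mono, lower_adj_counit.
Qed.

Lemma adh_mor_unit (L : coframe) (nu : L -> L) :
  adh_obj C nu -> adh_mor C nu (adh (lim_of nu)) (fun x => x).
Proof.
  intros [_ [_ [_ nu_inf]]]. split; [apply Mor_id|]. intro l'.
  rewrite lower_adj_id, nu_inf. apply inf_glb. intros y [a [Ha [Hla ->]]].
  eapply le_trans; [| exact (adh0_lim_of_le nu Ha)].
  apply inf_lb. exists a; repeat split; auto.
Qed.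

Lemma conv_mor_counit (L : coframe) (lim : limT L) :
  conv_mor C (lim_of (adh lim)) lim (fun x => x).
Proof. split; [apply Mor_id | intros F HF; exact (lim_le_lim_of_adh lim HF)]. Qed.

Lemma adjunction_statement_full (P : forall L : coframe, limT L -> Prop) :
  (forall L lim, P L lim -> conv_obj C lim) ->
  (forall L nu, adh_obj C nu -> P L (lim_of nu)) ->
  adjunction_statement C P.
Proof.
  intros HPconv HPlim_of.
  split; [|split; [|split; [|split]]].
  - intros L lim H. exact (adh_obj_adh (HPconv _ _ H)).
  - intros L L' lim lim' phi H H'. exact (adh_mor_conv_mor (HPconv _ _ H) (HPconv _ _ H')).
  - exact HPlim_of.
  - exact conv_mor_adh_mor.
  - exists (fun L nu x => x), (fun L lim x => x).
    split; [|split; [|split; [|split; [|split]]]]; intros; try reflexivity.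
    + now apply adh_mor_unit.
    + apply conv_mor_counit.
Qed.

End Functors.

Theorem mainTheorem9 (C : admissible_cat) :
  adjunction_statement C (pretop_obj C) /\ adjunction_statement C (pretop_cl_obj C).
Proof.
  split; apply adjunction_statement_full.
  - intros L lim [H _]; exact H.
  - intros L nu H. split; [exact (conv_obj_lim_of H) | apply lim_of_pretopological].
  - intros L lim [H _]; exact H.
  - intros L nu H. split; [exact (conv_obj_lim_of H) |].
    split; [apply lim_of_pretopological | apply lim_of_classical].
Qed.
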